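(* Let $G$ be a bipartite graph with bipartition $(X,Y)$, $|X| = n\geq 2$, $|Y|=m$, every $x\in X$ having degree at least $\delta$, and let $(C,x)$ be a tight pair in $G$. If $n\leq\delta$ and $Y\cap V(C)\subseteq N(x)$, then for each $w \in X\cap V(C)$ and each $y\in N(w)\setminus V(C)$, the vertex $w$ separates $y$ from $V(C)\setminus\{w\}$ in $G$ (i.e., every path in $G$ from $y$ to $V(C)\setminus\{w\}$ passes through $w$).
   Context: A tight pair in $G$ is a pair $(C,x)$ where $C$ is a longest cycle in $G$ and $x \in X \setminus V(C)$, chosen such that $|N(x)\cap V(C)|$ is maximum over all pairs $(C',x')$ with $C'$ a longest cycle in $G$ and $x' \in X\setminus V(C')$. *)

From mathcomp Require Import all_boot.
Set Implicit Arguments. Unset Strict Implicit. Unset Printing Implicit Defensive.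

Section Graphs.
Variable T : finType.
Variable e : rel T.

Definition simple_graph : Prop := symmetric e /\ irreflexive e.

(* (X, ~: X) is a bipartition: every edge joins X to its complement *)
Definition bipartition (X : {set T}) : Prop :=
  forall u v, e u v -> (u \in X) != (v \in X).

Definition nbhd (v : T) : {set T} := [set u | e v u].

(* a cycle: a cyclic sequence of >= 3 distinct vertices, consecutive ones
   (cyclically) adjacent; its vertex set is [set u in c], its length size c *)
Definition is_cycle (c : seq T) : bool :=
  [&& uniq c, 2 < size c & cycle e c].

Definition longest_cycle (c : seq T) : Prop :=
  is_cycle c /\ forall c', is_cycle c' -> size c' <= size c.

Definition tight_pair (X : {set T}) (C : seq T) (x : T) : Prop :=
  [/\ longest_cycle C, x \in X, x \notin C &
      forall C' x', longest_cycle C' -> x' \in X -> x' \notin C' ->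
        #|nbhd x' :&: [set u in C']| <= #|nbhd x :&: [set u in C]| ].

(* a path from a to b: sequence p with a :: p an e-path ending at b,
   with no repeated vertex *)
Definition is_path (a : T) (p : seq T) (b : T) : bool :=
  [&& path e a p, last a p == b & uniq (a :: p)].

Definition separates (w y : T) (S : {set T}) : Prop :=
  forall (p : seq T) (b : T), b \in S -> is_path y p b -> w \in y :: p.
End Graphs.

(* Rotate C to w c_1 ... c_k; then c_1 and c_k lie outside X.  A path from y to
   C - w avoiding w has a first vertex z in C + x, which yields a path w Q z with
   Q nonempty and disjoint from C + x.  If z = x, then w Q x c_1 ... c_k is a
   longer cycle.  If z = c_1, so is w Q c_1 ... c_k.  Otherwise z = c_i with
   i >= 2, and by parity some c_j with j in {i - 1, i - 2}, j >= 1, lies outside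
   X, so w Q c_i ... c_k x c_j ... c_1 drops at most one vertex and gains Q and x. *)

From mathcomp Require Import all_boot zify.
Set Implicit Arguments. Unset Strict Implicit. Unset Printing Implicit Defensive.

Section Cycles.
Variables (T : finType) (e : rel T).
Hypothesis e_sym : symmetric e.

Lemma uniq_cat_outside (s1 s2 : seq T) :
  uniq s1 -> uniq s2 -> {in s2, forall u, u \notin s1} -> uniq (s1 ++ s2).
Proof. by move=> u1 u2 out; rewrite cat_uniq u1 u2 andbT; apply/hasPn. Qed.

Lemma path_rev_cons w A x :
  path e x (rev (w :: A)) = e x (last w A) && path e w A.
Proof.
rewrite [w :: A]lastI rev_rcons /= rev_path.
by rewrite (@eq_path _ _ e) // => u v; rewrite e_sym.
Qed.

Lemma is_cycle_expand_edge w z s r :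
  is_cycle e (w :: z :: s) -> uniq r -> {in r, forall u, u \notin w :: z :: s} ->
  path e w r -> e (last w r) z -> is_cycle e (w :: r ++ z :: s).
Proof.
case/and3P=> uC szC /= /andP[_ cyc] ur out pr lr.
apply/and3P; split.
- rewrite (perm_uniq (permEl (perm_catCA [:: w] r (z :: s)))).
  by apply: uniq_cat_outside => // u uC'; apply: contraL uC'; apply: out.
- by move: szC; rewrite /= size_cat /=; lia.
- by rewrite /= rcons_cat cat_path pr /= lr.
Qed.

Lemma is_cycle_reroute_rev w A D z s x Q :
  is_cycle e (w :: A ++ D ++ z :: s) -> uniq (x :: Q) ->
  {in x :: Q, forall u, u \notin w :: A ++ D ++ z :: s} ->
  path e w Q -> e (last w Q) z -> e (last z s) x -> e x (last w A) ->
  size D <= size Q -> is_cycle e (w :: Q ++ z :: s ++ x :: rev A).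
Proof.
case/and3P=> uC szC cyc uxQ out pQ lQ zsx xA le_DQ.
move: cyc; rewrite /= !rcons_cat !cat_path /= rcons_path => /and3P[pA _ /and3P[_ ps _]].
apply/and3P; split.
- have perm_new :
      perm_eq (w :: Q ++ z :: s ++ x :: rev A) ((x :: Q) ++ w :: A ++ z :: s).
    by apply/permP => P; rewrite /= !count_cat /= !count_cat /= count_rev; lia.
  have sub : subseq (w :: A ++ z :: s) (w :: A ++ D ++ z :: s).
    by rewrite /= eqxx cat_subseq ?subseq_refl ?suffix_subseq.
  rewrite (perm_uniq perm_new); apply: uniq_cat_outside (subseq_uniq sub uC) _ => //.
  by move=> u /(mem_subseq sub) uC'; apply: contraL uC'; apply: out.
- by move: szC le_DQ; rewrite /= !size_cat /= !size_cat /= size_rev; lia.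
- rewrite /= !rcons_cat cat_path pQ /= lQ rcons_cat cat_path ps /= zsx.
  by rewrite -rev_cons path_rev_cons xA.
Qed.

Lemma is_cycle_rot n c : is_cycle e (rot n c) = is_cycle e c.
Proof. by rewrite /is_cycle rot_uniq size_rot rot_cycle. Qed.

Lemma longest_cycle_rot n c : longest_cycle e c -> longest_cycle e (rot n c).
Proof.
by case=> cyc max_c; split=> [|c' /max_c]; rewrite ?is_cycle_rot ?size_rot.
Qed.

End Cycles.

Section Bipartite.
Variables (T : finType) (e : rel T) (X : {set T}).
Hypothesis e_bip : bipartition e X.

Lemma bipartition_adj u v : e u v -> (v \in X) = (u \notin X).
Proof. by move/e_bip; case: (u \in X); case: (v \in X). Qed.

Lemma bipartite_prefix_split w s1 z : path e w (rcons s1 z) ->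
  s1 = [::] \/
  exists A D, [/\ s1 = A ++ D, size D <= 1 & last w A \notin X].
Proof.
rewrite rcons_path => /andP[p_s1 s1z].
have [zX|zNX] := boolP (z \in X).
  by right; exists s1, [::]; rewrite cats0 -(bipartition_adj s1z) zX.
case/lastP: s1 p_s1 s1z => [|B b]; first by left.
rewrite rcons_path last_rcons => /andP[_ Bb] bz; right; exists B, [:: b].
by rewrite cats1 -(bipartition_adj Bb) -[b \in X]negbK -(bipartition_adj bz).
Qed.

End Bipartite.

Section LongestCycle.
Variables (T : finType) (e : rel T) (X : {set T}).
Hypotheses (e_sym : symmetric e) (e_bip : bipartition e X).
Variables (w x : T) (s : seq T).
Hypotheses (C_longest : longest_cycle e (w :: s)) (wX : w \in X).
Hypotheses (xX : x \in X) (xNC : x \notin w :: s).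
Hypothesis cycleY_sub_Nx : ~: X :&: [set u in w :: s] \subset nbhd e x.

Lemma adj_cycle_offX : {in w :: s, forall u, u \notin X -> e x u}.
Proof.
move=> u uC uNX; have : u \in ~: X :&: [set u in w :: s].
  by rewrite in_setI in_setC uNX in_set uC.
by move/(subsetP cycleY_sub_Nx); rewrite inE.
Qed.

Lemma no_longer_cycle c : is_cycle e c -> size (w :: s) < size c -> False.
Proof. by case: C_longest => _ maxC /maxC; rewrite leqNgt => /negP. Qed.

Lemma no_outside_path_to_x Q : uniq (x :: Q) -> {in Q, forall u, u \notin w :: s} ->
  path e w Q -> e (last w Q) x -> False.
Proof.
move=> uxQ outQ pQ Qx; case: C_longest => cycC _.
have [h [t def_s]] : exists h t, s = h :: t.
  by case: (s) cycC => [|h t]; [case/and3P | exists h, t].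
have wh : e w h by move: cycC; rewrite def_s => /and3P[_ _ /andP[]].
have xh : e x h.
  apply: adj_cycle_offX; last by rewrite (bipartition_adj e_bip wh) wX.
  by rewrite def_s !inE eqxx orbT.
apply: (@no_longer_cycle (w :: rcons Q x ++ h :: t)).
  apply: is_cycle_expand_edge; rewrite -?def_s //.
  - by rewrite rcons_uniq.
  - by move=> u; rewrite mem_rcons inE => /predU1P[->|/outQ].
  - by rewrite rcons_path pQ.
  - by rewrite last_rcons.
by rewrite def_s /= size_cat size_rcons /=; lia.
Qed.

Lemma no_outside_path_into_cycle (Q : seq T) z : Q != [::] -> uniq (x :: Q) ->
  {in Q, forall u, u \notin w :: s} -> path e w Q -> e (last w Q) z -> z \in s -> False.
Proof.
move=> Qne uxQ outQ pQ Qz zs; case: C_longest => cycC _.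
have Q_gt0 : 0 < size Q by rewrite lt0n size_eq0.
have [s1 [s2 def_s]] : exists s1 s2, s = s1 ++ z :: s2.
  by case/splitPr: zs => s1 s2; exists s1, s2.
move: (cycC); rewrite def_s => /and3P[_ _] /=.
rewrite rcons_cat cat_path /= rcons_path => /and3P[p_s1 s1z /andP[_ s2w]].
have xs2 : e (last z s2) x.
  rewrite e_sym; apply: adj_cycle_offX; last by rewrite -(bipartition_adj e_bip s2w).
  by rewrite def_s inE mem_cat (mem_last z s2) !orbT.
have p_s1z : path e w (rcons s1 z) by rewrite rcons_path p_s1.
have [s1_nil | [A [D [def_s1 szD AX]]]] := bipartite_prefix_split e_bip p_s1z.
  rewrite s1_nil /= in def_s.
  apply: (@no_longer_cycle (w :: Q ++ z :: s2)).
    apply: is_cycle_expand_edge; rewrite -?def_s //; first by case/andP: uxQ.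
  by rewrite def_s /= size_cat /= ltnS -[X in X < _]add0n ltn_add2r.
rewrite {}def_s1 -catA in def_s.
apply: (@no_longer_cycle (w :: Q ++ z :: s2 ++ x :: rev A)).
  apply: (@is_cycle_reroute_rev _ _ e_sym w A D); rewrite -?def_s //.
  - by move=> u; rewrite inE => /predU1P[->|/outQ].
  - by apply: adj_cycle_offX; rewrite // def_s -cat_cons mem_cat (mem_last w A).
  - exact: leq_trans szD Q_gt0.
rewrite def_s /= !size_cat /= size_cat /= size_rev.
by clear -Q_gt0 szD; lia.
Qed.

Lemma no_outside_path (Q : seq T) z : Q != [::] -> uniq (x :: Q) ->
  {in Q, forall u, u \notin w :: s} -> path e w (rcons Q z) -> z \in x :: s -> False.
Proof.
rewrite rcons_path inE => Qne uxQ outQ /andP[pQ Qz] /orP[/eqP zx | zs].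
  by apply: (no_outside_path_to_x uxQ outQ pQ); rewrite -zx.
exact: (no_outside_path_into_cycle Qne uxQ outQ pQ Qz zs).
Qed.

Lemma outside_neighbour_separated y : e w y -> y \notin w :: s ->
  separates e w y ([set u in w :: s] :\ w).
Proof.
move=> wy yNC p b bC /and3P[p_yp /eqP last_b u_yp]; apply/negPn/negP => wNp.
have yNx : y != x by apply: contraTneq xX => <-; rewrite (bipartition_adj e_bip wy) wX.
have has_hit : has [in x :: w :: s] (y :: p).
  apply/hasP; exists b; first by rewrite -last_b mem_last.
  by move: bC; rewrite !inE => /andP[_ ->]; rewrite !orbT.
have : ~~ [in x :: w :: s] (head y (y :: p)) by rewrite /= in_cons negb_or yNx.
have p_wyp : path e w (y :: p) by rewrite /= wy.
move: p_wyp u_yp wNp; case: (split_find_nth y has_hit) => z Q q2 hit_z /hasPn Q_nohit.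
rewrite cat_path cat_uniq mem_cat => /andP[p_Qz _] /andP[u_Qz _] /norP[wNQz _].
have [-> | Qne _] := eqVneq Q [::]; first by rewrite /= hit_z.
apply: (no_outside_path Qne _ _ p_Qz).
- move: u_Qz; rewrite rcons_uniq /= => /andP[_ ->]; rewrite andbT.
  by apply/negP => /Q_nohit; rewrite mem_head.
- by move=> u /Q_nohit; rewrite in_cons negb_or => /andP[].
- move: hit_z wNQz; rewrite !in_cons mem_rcons in_cons [w == z]eq_sym.
  by case: (z == w) => //= ->.
Qed.

End LongestCycle.

Theorem lemma3 (T : finType) (e : rel T) (X : {set T}) (n m delta : nat)
    (C : seq T) (x : T) :
  simple_graph e -> bipartition e X ->
  #|X| = n -> 2 <= n -> #|~: X| = m ->
  (forall v, v \in X -> delta <= #|nbhd e v|) ->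
  tight_pair e X C x ->
  n <= delta ->
  (~: X) :&: [set u in C] \subset nbhd e x ->
  forall w y, w \in X -> w \in C -> y \in nbhd e w -> y \notin C ->
    separates e w y ([set u in C] :\ w).
Proof.
move=> [e_sym _] e_bip _ _ _ _ [C_longest xX xNC _] _ cycleY_sub_Nx w y wX wC.
rewrite inE => wy yNC.
have [i s def_ws] := rot_to wC.
have inC u : (u \in C) = (u \in w :: s) by rewrite -def_ws mem_rot.
have def_C : [set u in C] = [set u in w :: s] by apply/setP => u; rewrite !inE inC.
rewrite def_C in cycleY_sub_Nx *.
apply: (outside_neighbour_separated e_sym e_bip _ wX xX _ cycleY_sub_Nx wy).
- by rewrite -def_ws; apply: longest_cycle_rot.
- by rewrite -inC.
- by rewrite -inC.
Qed.
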